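(* Consider the contact process with infection rate $\lambda<1$ on the star graph $S_k$ with root $\rho$ and $k$ leaves. Let $\ell=\lambda k$ and assume the root is infected at time $0$. Let $C$ be a positive number with $C\le \frac{\ell}{32\log\ell}$. Then with probability at least \[ 1-\frac{16C\log\ell}{\ell}-4\ell^{-C/4}, \] the root $\rho$ infects at least $C\log\ell$ leaves which remain infected throughout the time interval $\big[\frac{16C\log\ell}{\ell},1\big]$ (an interval containing $[1/2,1]$).
   Context: The star graph $S_k$ consists of a root $\rho$ joined by an edge to each of $k$ leaves. The contact process with infection rate $\lambda$: each infected vertex recovers at rate $1$ and infects each neighbour independently at rate $\lambda$, all events independent. *)

From HB Require Import structures.
From mathcomp Require Import all_boot all_order all_algebra.
From mathcomp Require Import all_classical all_reals all_analysis.
Set Implicit Arguments. Unset Strict Implicit. Unset Printing Implicit Defensive.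
Import Order.TTheory GRing.Theory Num.Theory.
Local Open Scope classical_set_scope.
Local Open Scope ring_scope.

(* Star graph S_k: vertices are [option 'I_k]; [None] is the root rho,
   [Some i] is the i-th leaf. *)
Definition vertex (k : nat) := option 'I_k.
Definition root {k : nat} : vertex k := None.

(* Clocks of the graphical representation (Harris construction):
   [inl v]          : recovery Poisson process at vertex v (rate 1);
   [inr (i, true)]  : infection arrows root -> leaf i (rate lambda);
   [inr (i, false)] : infection arrows leaf i -> root (rate lambda). *)
Definition clock (k : nat) := (option 'I_k + ('I_k * bool))%type.

Definition clock_rate {R : realType} {k : nat} (lam : R) (c : clock k) : R :=
  match c with inl _ => 1 | inr _ => lam end.

Definition arrow_clock {k : nat} (v w : vertex k) : option (clock k) :=
  match v, w with
  | None, Some i => Some (inr (i, true))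
  | Some i, None => Some (inr (i, false))
  | _, _ => None
  end.

Definition mutually_independent {d : measure_display} {T : measurableType d}
  {R : realType} (P : probability T R) {I : eqType} (X : I -> T -> R) : Prop :=
  forall (s : seq I), uniq s -> forall B : I -> set R,
    (forall i, measurable (B i)) ->
    P (\bigcap_(i in [set` s]) (X i @^-1` B i)) =
    (\prod_(i <- s) P (X i @^-1` B i))%E.

(* [tau c n] is the (n+1)-th interarrival time of clock c; the clocks are
   independent Poisson processes with rates [clock_rate lam c]. *)
Definition poisson_clocks {d : measure_display} {T : measurableType d}
  {R : realType} (P : probability T R) (k : nat) (lam : R)
  (tau : clock k * nat -> T -> R) : Prop :=
  (forall j, measurable_fun setT (tau j)) /\
  (forall c n B, measurable B ->
     P (tau (c, n) @^-1` B) = exponential_prob (clock_rate lam c) B) /\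
  mutually_independent P tau.

Definition arrival {T : Type} {R : realType} {k : nat}
  (tau : clock k * nat -> T -> R) (c : clock k) (n : nat) (w : T) : R :=
  \sum_(i < n.+1) tau (c, nat_of_ord i) w.

Definition no_recovery {T : Type} {R : realType} {k : nat}
  (tau : clock k * nat -> T -> R) (w : T) (v : vertex k) (s u : R) : Prop :=
  forall n, ~ (s < arrival tau (inl v) n w <= u).

(* an infection path starting at (v, s), making the successive jumps [hops]
   (target vertex, time of the infection arrow), and ending at (x, t) *)
Fixpoint inf_path {T : Type} {R : realType} {k : nat}
  (tau : clock k * nat -> T -> R) (w : T) (v : vertex k) (s : R)
  (hops : seq (vertex k * R)) (x : vertex k) (t : R) : Prop :=
  match hops with
  | [::] => v = x /\ s <= t /\ no_recovery tau w v s t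
  | (v', u) :: rest =>
      s <= u /\ no_recovery tau w v s u /\
      (exists c, arrow_clock v v' = Some c /\ exists n, arrival tau c n w = u) /\
      inf_path tau w v' u rest x t
  end.

(* contact process on S_k started from the configuration {rho}:
   x is infected at time t iff there is an infection path from (rho,0) to (x,t) *)
Definition infected {T : Type} {R : realType} {k : nat}
  (tau : clock k * nat -> T -> R) (w : T) (x : vertex k) (t : R) : Prop :=
  exists hops, inf_path tau w root 0 hops x t.

From HB Require Import structures.
From mathcomp Require Import all_boot all_order all_algebra.
From mathcomp Require Import all_classical all_reals all_analysis.
From mathcomp Require Import ring lra.
Set Implicit Arguments. Unset Strict Implicit. Unset Printing Implicit Defensive.
Import Order.TTheory GRing.Theory Num.Theory.
Local Open Scope classical_set_scope.
Local Open Scope ring_scope.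

(* Put T0 = 16 C log l / l and m = C log l.  If the first recovery of the root
   comes after T0, every leaf whose first arrow from the root arrives by T0 and
   whose own first recovery comes after 1 is infected throughout [T0, 1].  These
   "seeded" events use disjoint clocks for distinct leaves, so they are
   independent, each of probability p = (1 - e^(-lam T0)) / e >= lam T0 / 6.
   Weighting each configuration with fewer than m seeded leaves by 2^(m - #L)
   bounds the probability of that event by 2^m (1 - p/2)^k <= e^(-m/4) = l^(-C/4),
   and the root recovers before T0 with probability 1 - e^(-T0) <= T0. *)

Section real_bounds.
Variable R : realType.
Implicit Types x m : R.

Lemma ln2_le1 : ln (2 : R) <= 1.
Proof.
rewrite -[leRHS](expRK 1) ler_ln ?posrE ?expR_gt0 //.
by have := expR_ge1Dx (1 : R); rewrite (_ : 1 + 1 = 2).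
Qed.

Lemma expRN1_ge_quarter : 1 / 4 <= expR (-1 : R).
Proof.
have -> : (-1 : R) = - (1 / 2) + - (1 / 2) by lra.
by rewrite expRD; have := expR_ge1Dx (- (1 / 2) : R); nra.
Qed.

Lemma onemexpRN_ge x : 0 <= x <= 1 / 2 -> 2 / 3 * x <= 1 - expR (- x).
Proof.
move=> /andP[x0 x2]; have := expR_ge1Dx x; have := expRxMexpNx_1 x.
have := expR_gt0 (- x); nra.
Qed.

Lemma onemexpRN_le x : 1 - expR (- x) <= x.
Proof. by have := expR_ge1Dx (- x); lra. Qed.

Lemma ln_gt0_of_le_div x a c : 0 <= x -> 0 < a -> 0 < c ->
  c <= x / (a * ln x) -> 0 < ln x.
Proof.
move=> x0 a0 c0 cx; rewrite ltNge; apply/negP => lnx0.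
have : x / (a * ln x) <= 0 by rewrite mulr_ge0_le0 // invr_le0 mulr_ge0_le0 // ltW.
by have := le_trans cx; lra.
Qed.

Lemma sum_subsets_exprM (S : comNzRingType) (I : finType) (a b : S) :
  \sum_(L : {set I}) a ^+ #|L| * b ^+ #|~: L| = (a + b) ^+ #|I|.
Proof.
rewrite -prodr_const bigA_distr; apply: eq_bigr => L _.
rewrite (bigID (mem L)) /= -!prodr_const.
congr (_ * _); apply: eq_big => [i|i]; rewrite ?inE //.
- by move=> ->.
- by move=> /negbTE ->.
Qed.

Lemma binomial_tail_le (I : finType) x m : 0 <= x <= 1 -> 0 <= m ->
  \sum_(L : {set I} | #|L|%:R < m) x ^+ #|L| * (1 - x) ^+ #|~: L|
  <= expR (m * ln 2) * (1 - x / 2) ^+ #|I|.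
Proof.
move=> /andP[x0 x1] m0.
have ln20 : 0 <= ln (2 : R) by rewrite ln_ge0 // ler1n.
have term_ge0 (L : {set I}) : 0 <= (x / 2) ^+ #|L| * (1 - x) ^+ #|~: L|.
  by rewrite mulr_ge0 // exprn_ge0 // ?divr_ge0 // subr_ge0.
apply: (@le_trans _ _ (\sum_(L : {set I} | #|L|%:R < m)
    expR (m * ln 2) * ((x / 2) ^+ #|L| * (1 - x) ^+ #|~: L|))).
  apply: ler_sum => L Lm.
  rewrite expr_div_n mulrA mulrAC [leRHS]mulrAC.
  apply: ler_wpM2r; first by rewrite exprn_ge0 // subr_ge0.
  rewrite mulrC -mulrA ler_peMr ?exprn_ge0 //.
  rewrite -(lnK (_ : 0 < 2 ^+ #|L|)) ?posrE ?exprn_gt0 // lnXn //.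
  rewrite ler_pdivlMl ?expR_gt0 // mulr1 ler_expR.
  by rewrite -[ln 2 *+ _]mulr_natl; apply: ler_wpM2r => //; exact: ltW.
rewrite -big_distrr ler_wpM2l ?expR_ge0 //.
apply: (@le_trans _ _ (\sum_(L : {set I}) (x / 2) ^+ #|L| * (1 - x) ^+ #|~: L|)).
  rewrite [leRHS](bigID (fun L : {set I} => #|L|%:R < m)) /= lerDl.
  exact: sumr_ge0.
by rewrite sum_subsets_exprM (_ : x / 2 + (1 - x) = 1 - x / 2) //; lra.
Qed.

Lemma binomial_tail_expR_le (n : nat) x m : 0 <= x <= 1 -> 0 <= m ->
  5 * m <= 2 * (n%:R * x) -> expR (m * ln 2) * (1 - x / 2) ^+ n <= expR (- (m / 4)).
Proof.
move=> /andP[x0 x1] m0 mx.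
have onemX_le : (1 - x / 2) ^+ n <= expR (n%:R * (- (x / 2))).
  rewrite expRM_natl; apply: lerXn2r; rewrite ?nnegrE ?expR_ge0 //; first lra.
  by have := expR_ge1Dx (- (x / 2)); lra.
apply: le_trans (ler_wpM2l (expR_ge0 _) onemX_le) _.
by rewrite -expRD ler_expR; have := ln2_le1; nra.
Qed.

Lemma seeding_prob_in01 x : 0 <= x -> 0 <= (1 - expR (- x)) * expR (-1) <= 1.
Proof.
move=> x0; have := expR_gt0 (-1 : R); have := expR_gt0 (- x).
have : expR (- x) <= 1 by rewrite expR_le1; lra.
have : expR (-1) <= 1 :> R by rewrite expR_le1; lra.
by move=> *; apply/andP; split; nra.
Qed.

Lemma seeding_prob_ge x : 0 <= x <= 1 / 2 -> x / 6 <= (1 - expR (- x)) * expR (-1).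
Proof. by move=> x01; have := onemexpRN_ge x01; have := expRN1_ge_quarter; nra. Qed.

End real_bounds.

Section probability_bounds.
Context d (T : measurableType d) (R : realType) (P : probability T R).

Lemma le_prob_bigsetU (I : Type) (s : seq I) (Q : pred I) (F : I -> set T) :
  (forall i, measurable (F i)) ->
  (P (\big[setU/set0]_(i <- s | Q i) F i) <= \sum_(i <- s | Q i) P (F i))%E.
Proof.
move=> mF; elim: s => [|a s IH]; first by rewrite !big_nil measure0.
rewrite !big_cons; case: ifPn => // _.
apply: le_trans (measureU2 _ _ _) _ => //; first exact: bigsetU_measurable.
exact: leeD.
Qed.

Lemma prob_setC_setI_le (A B : set T) (a b : R) : measurable A -> measurable B ->
  (P (~` A) <= a%:E)%E -> (P (~` B) <= b%:E)%E -> (P (~` (A `&` B)) <= (a + b)%:E)%E.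
Proof.
move=> mA mB PA PB; rewrite setCI EFinD.
apply: le_trans (measureU2 _ _ _) _; [exact: measurableC | exact: measurableC |].
exact: leeD.
Qed.

Lemma prob_ge_of_setC_le (A : set T) (a : R) : measurable A ->
  (P (~` A) <= a%:E)%E -> ((1 - a)%:E <= P A)%E.
Proof.
move=> mA PA; rewrite -[A]setCK probability_setC; last exact: measurableC.
by rewrite EFinB; apply: leeB.
Qed.

End probability_bounds.

Section independent_events.
Context d (T : measurableType d) (R : realType) (P : probability T R).
Context (I : finType) (E : I -> set T) (p : R).
Hypothesis mE : forall i, measurable (E i).
Hypothesis PE : forall s, uniq s ->
  P (\big[setI/setT]_(i <- s) E i) = (p ^+ size s)%:E.

Lemma prob_occur_avoid (s1 s2 : seq I) : uniq (s1 ++ s2) ->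
  P (\big[setI/setT]_(i <- s1) E i `&` \big[setI/setT]_(i <- s2) ~` E i) =
  (p ^+ size s1 * (1 - p) ^+ size s2)%:E.
Proof.
elim: s2 s1 => [|j s2 IH] s1; first by rewrite cats0 big_nil setIT mulr1 => /PE.
rewrite (uniq_catCA s1 [:: j]) => uniq_s.
have mA : measurable (\big[setI/setT]_(i <- s1) E i `&` \big[setI/setT]_(i <- s2) ~` E i).
  by apply: measurableI; apply: bigsetI_measurable => i _; [|apply: measurableC].
rewrite big_cons setICA setIC -setDE measureD //; last first.
  exact: (le_lt_trans (probability_le1 P mA) (ltry _)).
rewrite setIAC [_ `&` E j]setIC.
have -> : E j `&` \big[setI/setT]_(i <- s1) E i = \big[setI/setT]_(i <- j :: s1) E i.
  by rewrite big_cons.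
have [_ uniq_s12] := andP uniq_s.
transitivity ((p ^+ size s1 * (1 - p) ^+ size s2)%:E -
  (p ^+ size (j :: s1) * (1 - p) ^+ size s2)%:E)%E.
  by congr (_ - _)%E; apply: IH.
by rewrite -EFinB /= exprS exprS; congr EFin; ring.
Qed.

Definition occurrences (w : T) : {set I} := [set i | `[< E i w >]].

Lemma occurrencesE (L : {set I}) : [set w | occurrences w = L] =
  \big[setI/setT]_(i <- enum L) E i `&` \big[setI/setT]_(i <- enum (~: L)) ~` E i.
Proof.
apply/seteqP; split => w /=; rewrite -!bigcap_seq.
- move=> <-; split => i /=; rewrite mem_enum !inE => /asboolP //.
- move=> [inL notinL]; apply/setP => i; rewrite inE.
  case: (boolP (i \in L)) => iL; apply/asboolP; first by apply: inL; rewrite /= mem_enum.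
  by apply: notinL; rewrite /= mem_enum inE iL.
Qed.

Lemma prob_occurrences_eq (L : {set I}) :
  P [set w | occurrences w = L] = (p ^+ #|L| * (1 - p) ^+ #|~: L|)%:E.
Proof.
rewrite occurrencesE prob_occur_avoid -?cardE //.
rewrite cat_uniq !enum_uniq andbT /=.
by apply/hasPn => i; rewrite !mem_enum !inE.
Qed.

Lemma few_occurrencesE (m : R) : [set w | #|occurrences w|%:R < m] =
  \big[setU/set0]_(L : {set I} | #|L|%:R < m) [set w | occurrences w = L].
Proof.
rewrite -bigcup_pred; apply/seteqP; split => w /=.
- by move=> few; exists (occurrences w) => //; rewrite /= inE.
- by move=> [L /= Lm ->].
Qed.

Lemma measurable_occurrences_eq (L : {set I}) :
  measurable [set w | occurrences w = L].
Proof.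
rewrite occurrencesE; apply: measurableI; apply: bigsetI_measurable => i _ //.
exact: measurableC.
Qed.

Lemma measurable_few_occurrences (m : R) :
  measurable [set w | #|occurrences w|%:R < m].
Proof.
rewrite few_occurrencesE; apply: bigsetU_measurable => L _.
exact: measurable_occurrences_eq.
Qed.

Lemma prob_few_occurrences (m : R) : 0 <= p <= 1 -> 0 <= m ->
  (P [set w | (#|occurrences w|%:R < m)%R] <=
   (expR (m * ln 2) * (1 - p / 2) ^+ #|I|)%:E)%E.
Proof.
move=> p01 m0; rewrite few_occurrencesE.
apply: le_trans (le_prob_bigsetU P _ _ measurable_occurrences_eq) _.
under eq_bigr do rewrite prob_occurrences_eq.
by rewrite sumEFin lee_fin binomial_tail_le.
Qed.

End independent_events.

Section infection_paths.
Context (T : Type) (R : realType) (k : nat) (tau : clock k * nat -> T -> R).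

Definition seeded_leaf (T0 : R) (i : 'I_k) : set T :=
  tau (inr (i, true), 0%N) @^-1` `[0, T0] `&` tau (inl (Some i), 0%N) @^-1` `]1, +oo[.

(* Interarrival times are nonnegative only almost surely; off this null set the
   recovery arrival times are nondecreasing. *)
Definition negative_recovery_gap : set T :=
  \bigcup_n \big[setU/set0]_(v : option 'I_k) tau (inl v, n) @^-1` `]-oo, 0[.

Lemma recovery_gap_ge0 w v n : ~ negative_recovery_gap w -> 0 <= tau (inl v, n) w.
Proof.
move=> no_gap; rewrite leNgt; apply/negP => gap; apply: no_gap; exists n => //.
by rewrite -bigcup_seq; exists v; rewrite /= ?mem_index_enum ?in_itv.
Qed.

Lemma first_le_arrival w v n : ~ negative_recovery_gap w ->
  tau (inl v, 0%N) w <= arrival tau (inl v) n w.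
Proof.
move=> no_gap; rewrite /arrival big_ord_recl lerDl.
by apply: sumr_ge0 => i _; exact: recovery_gap_ge0.
Qed.

Lemma no_recovery_before_first w v s u : ~ negative_recovery_gap w ->
  u < tau (inl v, 0%N) w -> no_recovery tau w v s u.
Proof.
move=> no_gap u_first n /andP[_]; rewrite leNgt => /negP; apply.
by apply: lt_le_trans u_first _; exact: first_le_arrival.
Qed.

Lemma seeded_leaf_infected w T0 i t : ~ negative_recovery_gap w ->
  T0 < tau (inl None, 0%N) w -> seeded_leaf T0 i w -> T0 <= t <= 1 ->
  infected tau w (Some i) t.
Proof.
move=> no_gap root_late [/=]; rewrite !in_itv /= andbT => /andP[u0 uT0] leaf_late.
move=> /andP[T0t t1]; exists [:: (Some i, tau (inr (i, true), 0%N) w)] => /=.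
split=> //; split; first by apply: no_recovery_before_first => //; lra.
split; first by exists (inr (i, true)); split=> //; exists 0%N; rewrite /arrival big_ord1.
split=> //; split; first lra.
by apply: no_recovery_before_first => //; lra.
Qed.

End infection_paths.

Section poisson_clocks.
Context (R : realType) d (T : measurableType d) (P : probability T R).
Context (k : nat) (lam : R) (tau : clock k * nat -> T -> R).
Hypothesis clocks : poisson_clocks P lam tau.

Lemma measurable_clock j (B : set R) : measurable B -> measurable (tau j @^-1` B).
Proof. by move=> mB; have := clocks.1 j measurableT B mB; rewrite setTI. Qed.

Lemma prob_clock j (B : set R) : measurable B ->
  P (tau j @^-1` B) = exponential_prob (clock_rate lam j.1) B.
Proof. by case: j => c n; exact: clocks.2.1. Qed.

Lemma prob_clock_lt0 j : P (tau j @^-1` `]-oo, 0[) = 0%E.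
Proof.
rewrite prob_clock //; apply: integral0_eq => x /=.
by rewrite in_itv /= => /lt0_exponential_pdf ->.
Qed.

Lemma prob_clock_itv0c j x : 0 < x ->
  P (tau j @^-1` `[0, x]) = (1 - expR (- clock_rate lam j.1 * x))%:E.
Proof. by move=> x0; rewrite prob_clock // exponential_prob_itv0c // EFinB. Qed.

Lemma prob_clock_gt j x : 0 < x ->
  P (tau j @^-1` `]x, +oo[) = (expR (- clock_rate lam j.1 * x))%:E.
Proof.
move=> x0; have mtau (i : interval R) : measurable (tau j @^-1` [set` i]).
  by apply: measurable_clock; exact: measurable_itv.
have -> : tau j @^-1` `]x, +oo[ =
    ~` (tau j @^-1` `]-oo, 0[ `|` tau j @^-1` `[0, x]).
  apply/seteqP; split => w /=; rewrite !in_itv /= andbT.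
  - by move=> xw [w0|/andP[_ wx]]; lra.
  - by move=> /not_orP[/negP]; rewrite -leNgt => w0 /negP; rewrite w0 /= -ltNge.
rewrite probability_setC; last by apply: measurableU; apply: mtau.
rewrite measureU ?mtau //; last first.
  by apply/seteqP; split => w //=; rewrite !in_itv /= => -[w0 /andP[]]; lra.
transitivity (1 - (0 + (1 - expR (- clock_rate lam j.1 * x))%:E))%E.
  by congr (_ - (_ + _))%E; [exact: prob_clock_lt0 | exact: prob_clock_itv0c].
by rewrite add0e -EFinB; congr EFin; lra.
Qed.

Lemma prob_first_recovery_le v x : 0 < x ->
  (P (~` (tau (inl v, 0%N) @^-1` `]x, +oo[)) <= x%:E)%E.
Proof.
move=> x0; rewrite probability_setC; last first.
  by apply: measurable_clock; exact: measurable_itv.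
by rewrite prob_clock_gt // -EFinB lee_fin /= mulN1r onemexpRN_le.
Qed.

Lemma measurable_seeded_leaf T0 i : measurable (seeded_leaf tau T0 i).
Proof. by apply: measurableI; apply: measurable_clock; exact: measurable_itv. Qed.

Lemma prob_seeded_leaves T0 (s : seq 'I_k) : 0 < T0 -> uniq s ->
  P (\big[setI/setT]_(i <- s) seeded_leaf tau T0 i) =
  (((1 - expR (- (lam * T0))) * expR (-1)) ^+ size s)%:E.
Proof.
move=> T00 uniq_s.
pose arrow i : clock k * nat := (inr (i, true), 0%N).
pose recovery i : clock k * nat := (inl (Some i), 0%N).
pose B (j : clock k * nat) := if j.1 is inl _ then `]1, +oo[%classic else `[0, T0]%classic.
have -> : \big[setI/setT]_(i <- s) seeded_leaf tau T0 i =
    \big[setI/setT]_(j <- map arrow s ++ map recovery s) tau j @^-1` B j.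
  by rewrite big_split big_cat !big_map.
have uniq_clocks : uniq (map arrow s ++ map recovery s).
  rewrite cat_uniq !map_inj_uniq // => [|i i' []|i i' []] //.
  by rewrite uniq_s andbT; apply/hasPn => _ /mapP[i _ ->]; apply/mapP => -[].
rewrite -bigcap_seq clocks.2.2 //; last by move=> [[] ? ?]; exact: measurable_itv.
rewrite big_cat !big_map /=.
rewrite (eq_bigr (fun=> (1 - expR (- (lam * T0)))%:E)) => [|i _]; last first.
  by rewrite prob_clock_itv0c //= mulNr.
rewrite [X in (_ * X)%E](eq_bigr (fun=> (expR (-1))%:E)) => [|i _]; last first.
  by rewrite prob_clock_gt //= mulr1.
by rewrite !prodEFin -EFinM !big_const_seq count_predT !iter_mulr_1 exprMn.
Qed.

Lemma measurable_negative_recovery_gap : measurable (negative_recovery_gap tau).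
Proof.
apply: bigcupT_measurable => n; apply: bigsetU_measurable => v _.
by apply: measurable_clock; exact: measurable_itv.
Qed.

Lemma prob_negative_recovery_gap : P (negative_recovery_gap tau) = 0%E.
Proof.
apply/negligibleP; first exact: measurable_negative_recovery_gap.
apply: negligible_bigcup => n.
elim/big_ind: _ => [|A B|v _]; [exact: negligible_set0|exact: negligibleU|].
apply/negligibleP; last exact: prob_clock_lt0.
by apply: measurable_clock; exact: measurable_itv.
Qed.

End poisson_clocks.

Lemma many_seeded_leaves (R : realType) d (T : measurableType d)
  (P : probability T R) (k : nat) (lam m T0 : R) (tau : clock k * nat -> T -> R) :
  poisson_clocks P lam tau -> 0 < lam < 1 -> 0 <= m -> 0 < T0 <= 1 / 2 ->
  k%:R * (lam * T0) = 16 * m ->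
  exists A : set T, measurable A /\
    A `<=` [set w | exists L : {set 'I_k}, m <= #|L|%:R /\
      forall i, i \in L -> forall t, T0 <= t <= 1 -> infected tau w (Some i) t] /\
    ((1 - (T0 + expR (- (m / 4))))%:E <= P A)%E.
Proof.
move=> clocks /andP[lam0 lam1] m0 /andP[T00 T01] kT0.
have lamT0 : 0 <= lam * T0 <= 1 / 2 by apply/andP; split; nra.
set p := (1 - expR (- (lam * T0))) * expR (-1).
have p_ge : lam * T0 / 6 <= p := seeding_prob_ge lamT0.
have p01 : 0 <= p <= 1 by apply: seeding_prob_in01; case/andP: lamT0.
set E := seeded_leaf tau T0.
have mE := measurable_seeded_leaf clocks T0.
have PE (s : seq 'I_k) (us : uniq s) := prob_seeded_leaves clocks T00 us.
set alive := tau (inl None, 0%N) @^-1` `]T0, +oo[.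
set many := ~` [set w | #|occurrences E w|%:R < m].
set gap := negative_recovery_gap tau.
have malive : measurable alive.
  by apply: (measurable_clock clocks); exact: measurable_itv.
have mmany : measurable many by exact/measurableC/measurable_few_occurrences.
have mgap : measurable gap := measurable_negative_recovery_gap clocks.
exists (alive `&` many `&` ~` gap).
split; first by apply: measurableI; [exact: measurableI | exact: measurableC].
split.
  move=> w [[alive_w many_w] no_gap]; exists (occurrences E w).
  split=> [|i]; first by rewrite leNgt; apply/negP.
  rewrite inE => /asboolP seeded_i t t01; apply: seeded_leaf_infected seeded_i t01 => //.
  by move: alive_w; rewrite /alive /= in_itv /= andbT.
have P_few : (P (~` many) <= (expR (- (m / 4)))%:E)%E.
  rewrite setCK; apply: le_trans (prob_few_occurrences mE PE p01 m0) _.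
  rewrite lee_fin card_ord; apply: binomial_tail_expR_le => //.
  have : k%:R * (lam * T0) / 6 <= k%:R * p by rewrite -mulrA; apply: ler_wpM2l.
  by rewrite kT0 -/p; lra.
have P_gap : (P (~` ~` gap) <= 0%:E)%E.
  by rewrite setCK (prob_negative_recovery_gap clocks).
apply: prob_ge_of_setC_le; first by apply: measurableI; [exact: measurableI | exact: measurableC].
rewrite -[T0 + _]addr0; apply: prob_setC_setI_le => //; [exact: measurableI | exact: measurableC |].
exact: prob_setC_setI_le (prob_first_recovery_le clocks _ T00) P_few.
Qed.

Theorem lemma3p1 (R : realType) (d : measure_display) (T : measurableType d)
  (P : probability T R) (k : nat) (lam C : R)
  (tau : clock k * nat -> T -> R) :
  poisson_clocks P lam tau ->
  0 < lam -> lam < 1 ->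
  0 < C -> C <= (lam * k%:R) / (32 * ln (lam * k%:R)) ->
  exists A : set T, measurable A /\
    A `<=` [set w | exists L : {set 'I_k},
                      C * ln (lam * k%:R) <= (#|L|)%:R /\
                      forall i, i \in L -> forall t : R,
                        16 * C * ln (lam * k%:R) / (lam * k%:R) <= t <= 1 ->
                        infected tau w (Some i) t] /\
    ((1 - 16 * C * ln (lam * k%:R) / (lam * k%:R)
       - 4 * (lam * k%:R) `^ (- (C / 4)))%:E <= P A)%E.
Proof.
move=> clocks lam0 lam1 C0 Cle; set l := lam * k%:R.
have lnl0 : 0 < ln l by apply: ln_gt0_of_le_div Cle => //; rewrite mulr_ge0 // ltW.
have l1 : 1 < l by rewrite ltNge; apply/negP => /ln_le0; lra.
set m := C * ln l; have m0 : 0 < m by rewrite mulr_gt0.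
have m32 : 32 * m <= l by rewrite /m mulrCA -ler_pdivlMr ?mulr_gt0.
have T0E : 16 * C * ln l / l = 16 * m / l by rewrite mulrA.
have l0 : 0 < l by lra.
have T0_range : 0 < 16 * m / l <= 1 / 2.
  by rewrite divr_gt0 ?ler_pdivrMr //=; lra.
have kT0 : k%:R * (lam * (16 * m / l)) = 16 * m.
  by rewrite mulrA [k%:R * lam]mulrC -/l mulrC divfK // gt_eqF //; lra.
have lam01 : 0 < lam < 1 by rewrite lam0 lam1.
have [A [mA [A_sub PA]]] := many_seeded_leaves clocks lam01 (ltW m0) T0_range kT0.
exists A; split=> //; split; first by rewrite T0E.
have powE : l `^ (- (C / 4)) = expR (- (m / 4)).
  by rewrite /powR gt_eqF // mulNr mulrAC.
apply: le_trans PA; rewrite T0E powE lee_fin.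
by have := expR_ge0 (- (m / 4)); lra.
Qed.
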